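(* Let $p\ge2$, $n\ge1$, $\epsilon\in[0,1-1/p]$, $m\in\{j/p^n:0\le j\le p^n\}$, and let $\Phi:[0,1]\to\mathbb{R}$ be convex. Then there exists a monotone Boolean function $f:(\mathbb{Z}/p\mathbb{Z})^n\to\{0,1\}$ with $\mathbb{E} f=m$ such that $\mathbb{E}\Phi(T_\epsilon f)\ge\mathbb{E}\Phi(T_\epsilon g)$ for every Boolean function $g:(\mathbb{Z}/p\mathbb{Z})^n\to\{0,1\}$ with $\mathbb{E} g=m$.
   Context: $(\mathbb{Z}/p\mathbb{Z})^n$, with $\mathbb{Z}/p\mathbb{Z}=\{0,1,\dots,p-1\}$, carries the uniform measure. The noise operator is $T_\epsilon f(x)=\mathbb{E} f(x+Z)$, where $Z$ has independent coordinates, each equal to $0$ with probability $1-\epsilon$ and to each nonzero element with probability $\epsilon/(p-1)$. A function $f$ is monotone if $f(x)\le f(y)$ whenever $x_i\le y_i$ for all $i$, where $\{0,1,\dots,p-1\}$ is ordered as integers. *)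

From HB Require Import structures.
From mathcomp Require Import all_boot all_order all_algebra.
Set Implicit Arguments. Unset Strict Implicit. Unset Printing Implicit Defensive.
Import Order.TTheory GRing.Theory Num.Theory.
Local Open Scope ring_scope.

(* The cube (Z/pZ)^n, for p >= 2 (so 'Z_p is really Z/pZ). *)
Definition cube (p n : nat) := {ffun 'I_n -> 'Z_p}.

Definition expect (R : realFieldType) (p n : nat) (F : cube p n -> R) : R :=
  (\sum_(x : cube p n) F x) / #|{: cube p n}|%:R.

Definition noise_prob (R : realFieldType) (p n : nat) (eps : R) (z : cube p n) : R :=
  \prod_(i < n) (if z i == 0 then 1 - eps else eps / (p.-1)%:R).

Definition T_noise (R : realFieldType) (p n : nat) (eps : R)
    (f : cube p n -> R) (x : cube p n) : R :=
  \sum_(z : cube p n) noise_prob eps z * f [ffun i => x i + z i].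

Definition bool_fun (R : realFieldType) (p n : nat) (f : cube p n -> bool) : cube p n -> R :=
  fun x => (f x)%:R.

(* monotone w.r.t. the coordinatewise order, 0 < 1 < ... < p-1 as integers *)
Definition monotone_bool (p n : nat) (f : cube p n -> bool) : Prop :=
  forall x y : cube p n, (forall i, (val (x i) <= val (y i))%N) -> (f x ==> f y).

Definition convex01 (R : realFieldType) (Phi : R -> R) : Prop :=
  forall x y t : R, 0 <= x <= 1 -> 0 <= y <= 1 -> 0 <= t <= 1 ->
    Phi (t * x + (1 - t) * y) <= t * Phi x + (1 - t) * Phi y.

From HB Require Import structures.
From mathcomp Require Import all_boot all_order all_algebra perm.
From mathcomp Require Import ring lra.
Set Implicit Arguments. Unset Strict Implicit. Unset Printing Implicit Defensive.
Import Order.TTheory GRing.Theory Num.Theory.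
Local Open Scope ring_scope.

(* For a coordinate i and values a < b, the polarization of g
   moves the ones of g from level a up to level b in coordinate i, within each
   pair {x, x with a and b exchanged in coordinate i}.  This preserves E g.
   Since the one-coordinate noise kernel is largest on the diagonal (this is
   where eps <= 1 - 1/p is used), on each pair it replaces the two values of
   T_eps g by two values with the same sum that lie further apart, so
   E Phi(T_eps g) does not decrease when Phi is convex.  Among the maximizers
   of E Phi(T_eps g) with E g = m, one maximizing sum_x (x_1 + ... + x_n) g(x) admits no
   non-trivial polarization, hence is monotone. *)

(* [u] and [v] are the convex combinations of [s] and [t] with the weights
   [(c, 1 - c)] and [(1 - c, c)]. *)
Lemma convex01_spread (R : realFieldType) (Phi : R -> R) (u v s t : R) :
  convex01 Phi -> 0 <= t -> s <= 1 -> s + t = u + v -> u <= s -> v <= s ->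
  Phi u + Phi v <= Phi s + Phi t.
Proof.
move=> cvx t_ge0 s_le1 sum_eq u_le v_le.
have [s_eq_t | s_neq_t] := eqVneq s t.
  have [-> ->] : u = s /\ v = s by split; lra.
  by rewrite s_eq_t.
have d_gt0 : 0 < s - t by rewrite subr_gt0 lt_neqAle eq_sym s_neq_t /=; lra.
pose c := (u - t) / (s - t).
have c_ge0 : 0 <= c by rewrite divr_ge0 //; lra.
have c_le1 : c <= 1 by rewrite ler_pdivrMr // mul1r; lra.
have c01 : 0 <= c <= 1 by rewrite c_ge0 c_le1.
have c'01 : 0 <= 1 - c <= 1 by apply/andP; split; lra.
have s01 : 0 <= s <= 1 by apply/andP; split; lra.
have t01 : 0 <= t <= 1 by apply/andP; split; lra.
have u_eq : c * s + (1 - c) * t = u by rewrite /c; field; rewrite subr_eq0.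
have v_eq : (1 - c) * s + (1 - (1 - c)) * t = v by lra.
have := cvx s t c s01 t01 c01; have := cvx s t (1 - c) s01 t01 c'01.
by rewrite u_eq v_eq; lra.
Qed.

Lemma tperm_eqR (T : finType) (x y z : T) : (tperm x y z == y) = (z == x).
Proof. by rewrite -[X in _ == X](tpermL x y) (inj_eq perm_inj). Qed.

Lemma tperm_eqL (T : finType) (x y z : T) : (tperm x y z == x) = (z == y).
Proof. by rewrite tpermC tperm_eqR. Qed.

Definition mass (R : pzSemiRingType) (p n : nat) (g : cube p n -> bool) : R :=
  \sum_x (g x)%:R.

Lemma eq_mass (R : pzSemiRingType) (p n : nat) (g h : cube p n -> bool) :
  g =1 h -> mass R g = mass R h.
Proof. by move=> gh; apply: eq_bigr => x _; rewrite gh. Qed.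

Section Polarization.
Variables (p n : nat) (i : 'I_n) (a b : 'Z_p).

Definition swap_at (x : cube p n) : cube p n :=
  [ffun j => if j == i then tperm a b (x j) else x j].

Definition polarize (g : cube p n -> bool) (x : cube p n) : bool :=
  if x i == b then g x || g (swap_at x)
  else if x i == a then g x && g (swap_at x) else g x.

Lemma swap_at_id x : swap_at x i = tperm a b (x i).
Proof. by rewrite ffunE eqxx. Qed.

Lemma swap_at_neq x j : j != i -> swap_at x j = x j.
Proof. by rewrite ffunE => /negbTE ->. Qed.

Lemma swap_atK : involutive swap_at.
Proof.
by move=> x; apply/ffunP => j; rewrite !ffunE; case: eqP => // ->; rewrite tpermK.
Qed.

Lemma swap_at_inj : injective swap_at.
Proof. exact: inv_inj swap_atK. Qed.

Lemma swap_at_out (x : cube p n) : x i != a -> x i != b -> swap_at x = x.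
Proof.
move=> xa xb; apply/ffunP => j; rewrite ffunE.
by case: eqP => // ->; rewrite tpermD // eq_sym.
Qed.

Lemma polarize_swap_at g : polarize (g \o swap_at) =1 polarize g.
Proof.
move=> x; rewrite /polarize /= swap_atK.
case: ifP => [_ | /negbT xb]; first exact: orbC.
case: ifP => [_ | /negbT xa]; first exact: andbC.
by rewrite swap_at_out.
Qed.

Hypothesis neq_ab : a != b.

Section Sums.
Variable R : comPzRingType.

Lemma sum_pairs (F : cube p n -> R) :
  \sum_y F y = \sum_(y : cube p n | y i == b) (F y + F (swap_at y))
               + \sum_(y : cube p n | (y i != b) && (y i != a)) F y.
Proof.
rewrite (bigID (fun y : cube p n => y i == b)) big_split /= -addrA; congr (_ + _).
rewrite (bigID (fun y : cube p n => y i == a)) /=; congr (_ + _).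
rewrite (reindex_inj swap_at_inj); apply: eq_bigl => y.
rewrite swap_at_id tperm_eqR tperm_eqL andbC.
by case: eqP => // ->; rewrite eq_sym neq_ab.
Qed.

Lemma sum_polarize (w : cube p n -> R) (g : cube p n -> bool) :
  \sum_y w y * (polarize g y)%:R = \sum_y w y * (g y)%:R
    + \sum_(y : cube p n | y i == b)
        (if ~~ g y && g (swap_at y) then w y - w (swap_at y) else 0).
Proof.
rewrite !sum_pairs addrAC -big_split /=; congr (_ + _).
  apply: eq_bigr => y yb.
  rewrite /polarize yb swap_at_id (eqP yb) tpermR (negbTE neq_ab) eqxx swap_atK.
  by case: (g y); case: (g (swap_at y)); rewrite /= ?mulr0 ?mulr1 ?addr0 ?add0r //; ring.
by apply: eq_bigr => y /andP[/negbTE yb /negbTE ya]; rewrite /polarize yb ya.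
Qed.

Lemma mass_polarize (g : cube p n -> bool) : mass R (polarize g) = mass R g.
Proof.
rewrite /mass; have := sum_polarize (fun=> 1) g; rewrite [X in _ + X]big1 ?addr0 => [|y _].
  by under eq_bigr do rewrite mul1r; under [in RHS]eq_bigr do rewrite mul1r.
by case: ifP; rewrite ?subrr.
Qed.
End Sums.
End Polarization.

Section Potential.
Variables (R : realFieldType) (p n : nat).

Definition weight (x : cube p n) : nat := \sum_(j < n) val (x j).

Definition potential (g : cube p n -> bool) : R := \sum_x (weight x)%:R * (g x)%:R.

Lemma eq_potential (g h : cube p n -> bool) : g =1 h -> potential g = potential h.
Proof. by move=> gh; apply: eq_bigr => x _; rewrite gh. Qed.

Variables (i : 'I_n) (a b : 'Z_p).

Lemma weight_swap_at (y : cube p n) :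
  y i = b -> (weight (swap_at i a b y) + val b = weight y + val a)%N.
Proof.
move=> yb; rewrite /weight (bigD1 i) // [in RHS](bigD1 i) //= swap_at_id yb tpermR.
rewrite (eq_bigr (fun j => val (y j))) => [|j ji]; last by rewrite swap_at_neq.
by rewrite addnAC [RHS]addnAC (addnC a).
Qed.

Lemma potential_polarize_lt (g : cube p n -> bool) (y : cube p n) :
  (val a < val b)%N -> y i = b -> ~~ g y -> g (swap_at i a b y) ->
  potential g < potential (polarize i a b g).
Proof.
move=> lt_ab yb gy gy'.
have neq_ab : a != b by apply: contraTneq lt_ab => ->; rewrite ltnn.
have gain (z : cube p n) : z i = b ->
    (weight z)%:R - (weight (swap_at i a b z))%:R = (val b)%:R - (val a)%:R :> R.
  move=> zb; have /(congr1 (GRing.natmul (1 : R))) := weight_swap_at zb.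
  rewrite !natrD; lra.
rewrite /potential sum_polarize // ltrDl (bigD1 y) ?yb //= gy gy' gain //.
rewrite ltr_pwDl ?subr_gt0 ?ltr_nat //; apply: sumr_ge0 => z /andP[/eqP zb _].
by case: ifP => // _; rewrite gain // subr_ge0 ler_nat ltnW.
Qed.

End Potential.

Section ProductKernel.
Variables (R : realFieldType) (p n : nat) (k0 k1 : R).

Definition coord_kernel (c d : 'Z_p) : R := if c == d then k0 else k1.

Definition kernel (x y : cube p n) : R := \prod_(j < n) coord_kernel (x j) (y j).

Definition kernel_avg (g : cube p n -> bool) (x : cube p n) : R :=
  \sum_y kernel x y * (g y)%:R.

Definition energy (Phi : R -> R) (g : cube p n -> bool) : R :=
  \sum_x Phi (kernel_avg g x).

Lemma eq_kernel_avg (g h : cube p n -> bool) : g =1 h -> kernel_avg g =1 kernel_avg h.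
Proof. by move=> gh x; apply: eq_bigr => y _; rewrite gh. Qed.

Lemma eq_energy Phi (g h : cube p n -> bool) : g =1 h -> energy Phi g = energy Phi h.
Proof. by move=> gh; apply: eq_bigr => x _; rewrite (eq_kernel_avg gh). Qed.

Hypothesis k1_ge0 : 0 <= k1.
Hypothesis k1_le_k0 : k1 <= k0.

Lemma coord_kernel_ge0 c d : 0 <= coord_kernel c d.
Proof. by rewrite /coord_kernel; case: eqP => _; [exact: le_trans k1_le_k0 | ]. Qed.

Lemma kernel_ge0 x y : 0 <= kernel x y.
Proof. by apply: prodr_ge0 => j _; apply: coord_kernel_ge0. Qed.

Lemma kernel_avg_ge0 g x : 0 <= kernel_avg g x.
Proof. by apply: sumr_ge0 => y _; rewrite mulr_ge0 ?kernel_ge0. Qed.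

Hypothesis p_gt1 : (1 < p)%N.
Hypothesis k_sum : k0 + (p.-1)%:R * k1 = 1.

Lemma kernel_avg_le1 g x : kernel_avg g x <= 1.
Proof.
have row_sum c : \sum_d coord_kernel c d = 1.
  rewrite (bigD1 c) //= /coord_kernel eqxx -k_sum; congr (_ + _).
  rewrite (eq_bigr (fun=> k1)) => [|d]; last by rewrite eq_sym => /negbTE ->.
  by rewrite sumr_const cardC1 card_ord Zp_cast // mulr_natl.
have -> : 1 = \sum_y kernel x y.
  rewrite /kernel -(bigA_distr_bigA (fun j d => coord_kernel (x j) d)) /=.
  by rewrite big1 // => j _; apply: row_sum.
apply: ler_sum => y _; rewrite ler_piMr ?kernel_ge0 //.
by case: (g y).
Qed.

Section KernelPolarization.
Variables (i : 'I_n) (a b : 'Z_p).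
Local Notation swap_at := (swap_at i a b).
Local Notation polarize := (polarize i a b).

Lemma kernel_swap_at x y : kernel (swap_at x) (swap_at y) = kernel x y.
Proof.
apply: eq_bigr => j _; rewrite !ffunE.
by case: eqP => // _; rewrite /coord_kernel (inj_eq perm_inj).
Qed.

Lemma kernel_swap_atl x y : kernel (swap_at x) y = kernel x (swap_at y).
Proof. by rewrite -[in LHS](swap_atK i a b y) kernel_swap_at. Qed.

Lemma kernel_swap_atr x y : kernel x (swap_at y) =
  coord_kernel (x i) (tperm a b (y i)) * \prod_(j < n | j != i) coord_kernel (x j) (y j).
Proof.
rewrite /kernel (bigD1 i) //= swap_at_id; congr (_ * _).
by apply: eq_bigr => j ji; rewrite swap_at_neq.
Qed.

Lemma kernel_at x y :
  kernel x y = coord_kernel (x i) (y i) * \prod_(j < n | j != i) coord_kernel (x j) (y j).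
Proof. by rewrite /kernel (bigD1 i). Qed.

Lemma kernel_swap_at_out (x y : cube p n) :
  x i != a -> x i != b -> kernel x (swap_at y) = kernel x y.
Proof.
move=> xa xb; have fix_xi : tperm a b (x i) = x i by rewrite tpermD // eq_sym.
by rewrite kernel_swap_atr kernel_at /coord_kernel -{1}fix_xi (inj_eq perm_inj).
Qed.

Lemma kernel_swap_at_le (x y : cube p n) :
  x i != a -> y i = b -> kernel x (swap_at y) <= kernel x y.
Proof.
move=> xa yb; rewrite kernel_swap_atr kernel_at yb tpermR.
apply: ler_wpM2r; first by apply: prodr_ge0 => j _; apply: coord_kernel_ge0.
by rewrite /coord_kernel (negbTE xa); case: eqP.
Qed.

Hypothesis neq_ab : a != b.

Lemma kernel_avg_polarize (g : cube p n -> bool) (x : cube p n) :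
  x i != a -> kernel_avg g x <= kernel_avg (polarize g) x.
Proof.
move=> xa; rewrite /kernel_avg sum_polarize // lerDl; apply: sumr_ge0 => y /eqP yb.
by case: ifP => // _; rewrite subr_ge0 kernel_swap_at_le.
Qed.

Lemma kernel_avg_polarize_out (g : cube p n -> bool) (x : cube p n) :
  x i != a -> x i != b -> kernel_avg (polarize g) x = kernel_avg g x.
Proof.
move=> xa xb; rewrite /kernel_avg sum_polarize // [X in _ + X]big1 ?addr0 // => y _.
by case: ifP => // _; rewrite kernel_swap_at_out // subrr.
Qed.

Lemma kernel_avg_swap_at g x : kernel_avg g (swap_at x) = kernel_avg (g \o swap_at) x.
Proof.
rewrite /kernel_avg (reindex_inj (@swap_at_inj p n i a b)); apply: eq_bigr => y _.
by rewrite kernel_swap_at.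
Qed.

Lemma kernel_avg_swap_at_polarize (g : cube p n -> bool) (x : cube p n) :
  x i == b -> kernel_avg g (swap_at x) <= kernel_avg (polarize g) x.
Proof.
move=> /eqP xb; rewrite kernel_avg_swap_at -(eq_kernel_avg (polarize_swap_at i a b g)).
by apply: kernel_avg_polarize; rewrite xb eq_sym.
Qed.

Lemma kernel_avg_polarize_pair g x :
  kernel_avg (polarize g) x + kernel_avg (polarize g) (swap_at x)
  = kernel_avg g x + kernel_avg g (swap_at x).
Proof.
rewrite /kernel_avg -!big_split /=.
under eq_bigr do rewrite -mulrDl.
under [RHS]eq_bigr do rewrite -mulrDl.
rewrite sum_polarize // [X in _ + X]big1 ?addr0 // => y _.
by case: ifP => // _; rewrite !kernel_swap_atl swap_atK [X in _ - X]addrC subrr.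
Qed.

Lemma energy_polarize (Phi : R -> R) (g : cube p n -> bool) :
  convex01 Phi -> energy Phi g <= energy Phi (polarize g).
Proof.
move=> cvx; rewrite /energy !(sum_pairs i neq_ab); apply: lerD.
  apply: ler_sum => x xb; apply: convex01_spread => //.
  - exact: kernel_avg_ge0.
  - exact: kernel_avg_le1.
  - exact: kernel_avg_polarize_pair.
  - by apply: kernel_avg_polarize; rewrite (eqP xb) eq_sym.
  - exact: kernel_avg_swap_at_polarize.
by apply: ler_sum => x /andP[xb xa]; rewrite kernel_avg_polarize_out.
Qed.
End KernelPolarization.
End ProductKernel.

(* Induction on the number of coordinates in which x and y differ. *)
Lemma monotone_bool_of_steps (p n : nat) (g : cube p n -> bool) :
  (forall i (a b : 'Z_p) (y : cube p n),
     (val a < val b)%N -> y i = b -> g (swap_at i a b y) -> g y) ->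
  monotone_bool g.
Proof.
move=> step x y.
have [d] := ubnP #|[pred j | x j != y j]|; elim: d x => // d IHd x lt_d le_xy.
case: (pickP [pred j | x j != y j]) => [i /= xy_i | x_eq_y]; last first.
  suff -> : x = y by rewrite implybb.
  by apply/ffunP => j; apply/eqP; move: (x_eq_y j) => /= /negbFE.
pose x' := swap_at i (x i) (y i) x.
have x'_i : x' i = y i by rewrite swap_at_id tpermL.
have lt_i : (val (x i) < val (y i))%N.
  by rewrite ltn_neqAle le_xy andbT (inj_eq val_inj).
apply/implyP => gx; apply: (implyP (IHd x' _ _)).
- rewrite ltnS in lt_d; apply: leq_trans _ lt_d; apply: proper_card; apply/properP; split.
    by apply/subsetP => j; rewrite !inE; case: (eqVneq j i) => [-> | /swap_at_neq ->].
  exists i; rewrite !inE ?x'_i ?eqxx //.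
- by move=> j; case: (eqVneq j i) => [-> | /swap_at_neq ->]; rewrite ?x'_i.
- by apply: (step i (x i) (y i)); rewrite // swap_atK.
Qed.

Section Maximizer.
Variables (R : realFieldType) (p n : nat) (k0 k1 : R) (Phi : R -> R).
Hypotheses (p_gt1 : (1 < p)%N) (k1_ge0 : 0 <= k1) (k1_le_k0 : k1 <= k0).
Hypothesis k_sum : k0 + (p.-1)%:R * k1 = 1.
Hypothesis cvx : convex01 Phi.

Local Notation energy := (@energy R p n k0 k1 Phi).

Lemma exists_monotone_maximizer (m : R) (g0 : cube p n -> bool) :
  mass R g0 = m ->
  exists f : cube p n -> bool, [/\ monotone_bool f, mass R f = m &
    forall g, mass R g = m -> energy g <= energy f].
Proof.
move=> mass_g0.
pose P (h : {ffun cube p n -> bool}) := mass R h == m.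
have P_ffun (g : cube p n -> bool) : P [ffun x => g x] = (mass R g == m).
  by rewrite /P (eq_mass R (ffunE g)).
have Pg0 : P [ffun x => g0 x] by rewrite P_ffun mass_g0.
have [gm Pgm gm_max] := arg_maxP (fun h : {ffun cube p n -> bool} => energy h) Pg0.
pose Q h := P h && (energy h == energy gm).
have Qgm : Q gm by rewrite /Q Pgm eqxx.
have [f /andP[Pf /eqP f_gm] f_max] :=
  arg_maxP (fun h : {ffun cube p n -> bool} => potential R h) Qgm.
exists f; split; first last.
- move=> g mass_g; rewrite f_gm -(eq_energy _ _ _ (ffunE g)); apply: gm_max.
  by rewrite P_ffun mass_g.
- exact/eqP.
apply: monotone_bool_of_steps => i a b y lt_ab yb fy'; apply: contraT => fy.
have neq_ab : a != b by apply: contraTneq lt_ab => ->; rewrite ltnn.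
pose f' := [ffun x => polarize i a b f x].
have Qf' : Q f'.
  have Pf' : P f' by rewrite P_ffun mass_polarize.
  have energy_f' : energy f' = energy gm.
    apply/le_anti/andP; split; first exact: gm_max.
    by rewrite -f_gm (eq_energy _ _ _ (ffunE _)) energy_polarize.
  by rewrite /Q Pf' energy_f' eqxx.
have := f_max f' Qf'; rewrite /= (eq_potential R (ffunE _)) leNgt.
by rewrite (potential_polarize_lt R lt_ab yb fy fy').
Qed.

End Maximizer.

Lemma mass_card (R : pzSemiRingType) (p n : nat) (g : cube p n -> bool) :
  mass R g = #|g|%:R.
Proof.
rewrite /mass -sum1_card natr_sum [RHS]big_mkcond; apply: eq_bigr => x _.
by rewrite unfold_in; case: (g x).
Qed.

Lemma exists_card (T : finType) (j : nat) : (j <= #|T|)%N -> exists A : pred T, #|A| = j.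
Proof.
move=> le_j; exists (mem (take j (enum T))).
by rewrite (card_uniqP _) ?take_uniq ?enum_uniq // size_takel // -cardE.
Qed.

Section Noise.
Variables (R : realFieldType) (p n : nat) (eps : R).
Hypothesis p_gt1 : (1 < p)%N.

Lemma card_cube : #|{: cube p n}| = (p ^ n)%N.
Proof. by rewrite card_ffun !card_ord Zp_cast. Qed.

Lemma expectE (F : cube p n -> R) : expect F = (\sum_x F x) / (p ^ n)%:R.
Proof. by rewrite /expect card_cube. Qed.

Lemma exists_mass j : (j <= p ^ n)%N -> exists g : cube p n -> bool, mass R g = j%:R.
Proof.
by rewrite -card_cube => /exists_card[A card_A]; exists A; rewrite mass_card card_A.
Qed.

Lemma expect_bool_fun (g : cube p n -> bool) :
  expect (bool_fun R g) = mass R g / (p ^ n)%:R.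
Proof. exact: expectE. Qed.

Lemma T_noise_kernel_avg (g : cube p n -> bool) (x : cube p n) :
  T_noise eps (bool_fun R g) x = kernel_avg (1 - eps) (eps / (p.-1)%:R) g x.
Proof.
rewrite /T_noise (reindex (fun y : cube p n => [ffun j => y j - x j])) /=.
  apply: eq_bigr => y _; congr (_ * _).
    by apply: eq_bigr => j _; rewrite ffunE /coord_kernel subr_eq0 eq_sym.
  by congr (bool_fun R g); apply/ffunP => j; rewrite !ffunE addrC subrK.
exists (fun z : cube p n => [ffun j => x j + z j]) => z _; apply/ffunP => j;
  by rewrite !ffunE addrC ?subrK ?addKr.
Qed.

Lemma expect_T_noise (Phi : R -> R) (g : cube p n -> bool) :
  expect (fun x => Phi (T_noise eps (bool_fun R g) x))
  = energy (1 - eps) (eps / (p.-1)%:R) Phi g / (p ^ n)%:R.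
Proof.
by rewrite expectE; congr (_ * _); apply: eq_bigr => x _; rewrite T_noise_kernel_avg.
Qed.

Hypothesis eps_ge0 : 0 <= eps.
Hypothesis eps_le : eps <= 1 - (p%:R)^-1.

Lemma pred_p_gt0 : 0 < (p.-1)%:R :> R.
Proof. by rewrite ltr0n -ltnS prednK // ltnW. Qed.

Lemma noise_off_ge0 : 0 <= eps / (p.-1)%:R.
Proof. by rewrite divr_ge0. Qed.

Lemma noise_off_le_diag : eps / (p.-1)%:R <= 1 - eps.
Proof.
have p_eq : p%:R = (p.-1)%:R + 1 :> R by rewrite natr1 prednK // ltnW.
have p_gt0 : 0 < p%:R :> R by rewrite ltr0n ltnW.
have eps_p : eps * p%:R <= p%:R - 1.
  by move: eps_le; rewrite -(ler_pM2r p_gt0) mulrBl mulVf ?mul1r // lt0r_neq0.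
rewrite ler_pdivrMr ?pred_p_gt0 //; move: eps_p; rewrite p_eq; nra.
Qed.

Lemma noise_sum : (1 - eps) + (p.-1)%:R * (eps / (p.-1)%:R) = 1.
Proof. by rewrite mulrC divfK ?subrK // lt0r_neq0 // pred_p_gt0. Qed.

End Noise.

Unset Implicit Arguments.

Theorem theorem5 (R : realFieldType) (p n : nat) (eps : R) (j : nat) (Phi : R -> R) :
  (1 < p)%N -> (1 <= n)%N ->
  0 <= eps -> eps <= 1 - (p%:R)^-1 ->
  (j <= p ^ n)%N ->
  convex01 Phi ->
  exists f : cube p n -> bool,
    monotone_bool f /\
    expect (bool_fun R f) = j%:R / (p ^ n)%:R /\
    forall g : cube p n -> bool,
      expect (bool_fun R g) = j%:R / (p ^ n)%:R ->
      expect (fun x => Phi (T_noise eps (bool_fun R g) x))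
        <= expect (fun x => Phi (T_noise eps (bool_fun R f) x)).
Proof.
move=> p_gt1 _ eps_ge0 eps_le j_le cvx.
have [g0 mass_g0] := exists_mass R p_gt1 j_le.
have [f [f_mono f_mass f_max]] :=
  exists_monotone_maximizer p_gt1 (noise_off_ge0 p eps_ge0)
    (noise_off_le_diag p_gt1 eps_le) (noise_sum eps p_gt1) cvx mass_g0.
have N_neq0 : (p ^ n)%:R != 0 :> R by rewrite pnatr_eq0 -lt0n expn_gt0 (ltnW p_gt1).
exists f; split=> //; rewrite expect_bool_fun // f_mass; split=> // g.
rewrite expect_bool_fun // !expect_T_noise // => /(congr1 ( *%R^~ (p ^ n)%:R)).
rewrite /= !divfK // => /f_max energy_le.
by rewrite ler_wpM2r ?invr_ge0 ?ler0n.
Qed.
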